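(* Let $\tilde c_{g,1}$ be the number of NSG-compositions $x_1+\cdots+x_{m-1}$ of genus $g$ with $x_{m-1}=3$ and all other parts $x_1,\dots,x_{m-2}$ in $\{1,2\}$. Then $$\sum_{g\ge3}\tilde c_{g,1}q^g=\frac{1+q^2}{1-(2q^3+q^4)}\,q^3,$$ and in particular $\sum_g\tilde c_{g,1}\omega^{-g}=\omega^{-1}+\omega^{-3}=0.854101966\ldots$, where $\omega=\frac{1+\sqrt5}2$.
   Context: An NSG-composition is a composition $x_1+\cdots+x_{m-1}$ of positive integers satisfying $x_{s+t}\le x_s+x_t$ and $x_{m-s-t}\le x_{m-s}+x_{m-t}+1$ for all $s,t\ge1$, $s+t<m$ (equivalently, the Kunz vector of a numerical semigroup of multiplicity $m$); its genus is $\sum x_j$. *)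

From HB Require Import structures.
From mathcomp Require Import all_boot all_order all_algebra.
From mathcomp Require Import all_classical all_reals all_analysis.
Set Implicit Arguments. Unset Strict Implicit. Unset Printing Implicit Defensive.
Import Order.TTheory GRing.Theory Num.Theory.

(* A composition x_1 + ... + x_{m-1} is a sequence x of length m-1;
   x_j (1 <= j <= m-1) is [xat x j] = nth 0 x (j-1). *)
Definition xat (x : seq nat) (j : nat) : nat := nth 0 x j.-1.

Definition is_NSG (x : seq nat) : bool :=
  let m := (size x).+1 in
  all (fun a => 0 < a) x &&
  [forall s : 'I_m, forall t : 'I_m,
     [&& 0 < (s : nat), 0 < (t : nat) & s + t < m] ==>
     (xat x (s + t) <= xat x s + xat x t) &&
     (xat x (m - s - t) <= xat x (m - s) + xat x (m - t) + 1)].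

Definition genus (x : seq nat) : nat := sumn x.

Definition ctilde_shape (x : seq nat) : bool :=
  [&& 0 < size x, xat x (size x) == 3 &
      all (fun a => (a == 1) || (a == 2)) (take (size x).-1 x)].

(* Number of such NSG-compositions of genus g.  A composition of g into
   positive parts has at most g parts, each at most g, so enumerating
   k-tuples (k <= g) of elements of {0..g} is exhaustive. *)
Definition ctilde1 (g : nat) : nat :=
  \sum_(k < g.+1)
     #|[set t : k.-tuple 'I_g.+1 |
         let x := map (@nat_of_ord _) t in
         [&& is_NSG x, genus x == g & ctilde_shape x]]|.

From HB Require Import structures.
From mathcomp Require Import all_boot all_order all_algebra.
From mathcomp Require Import all_classical all_reals all_analysis.
From mathcomp Require Import ring lra zify.
Import Order.TTheory GRing.Theory Num.Theory.

(* Let c(g) = ctilde1 g.  A composition counted by c(g) is x = y ++ [:: 3]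
   with y a word over {1,2}.  For such x all NSG inequalities hold except
   possibly x_{m-1} <= x_s + x_{m-1-s}, which says that y_i = 2 or
   y_{|y|-1-i} = 2 for every position i ([mirror2 y], lemma [NSG_last3]).
   A mirror2 word of length n+2 is a mirror2 word of length n wrapped in an
   outer pair (1,2), (2,1) or (2,2), adding 3, 3 or 4 to the sum; the words of
   length 0 and 1 are [::] and [:: 2].  Counting by length and sum gives
     c(g) = [g = 3] + [g = 5] + 2 c(g-3) + c(g-4)           ([ctilde1_rec]),
   i.e. the first part of the theorem.
   For the value at q = r = 1/omega, the partial sums S_N of c(g) r^g are
   nondecreasing and satisfy S_{N+6} = r^3 + r^5 + 2 r^3 S_{N+3} + r^4 S_{N+2}.
   A general lemma on such sequences ([cvg_linear_recurrence]) gives the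
   limit (r^3 + r^5) / (1 - 2r^3 - r^4), which equals r + r^3 because
   r^2 + r = 1 makes the denominator r^2. *)

Set Implicit Arguments.
Unset Strict Implicit.
Unset Printing Implicit Defensive.

Fixpoint words (k B : nat) : seq (seq nat) :=
  if k is k'.+1 then [seq i :: s | i <- iota 0 B, s <- words k' B] else [:: [::]].

Lemma words_uniq k B : uniq (words k B).
Proof.
elim: k => [//|k IH] /=.
apply: allpairs_uniq => //; first exact: iota_uniq.
by move=> [i s] [j t] _ _ /= [-> ->].
Qed.

Lemma mem_words k B s : (s \in words k B) = (size s == k) && all (fun i => i < B) s.
Proof.
elim: k s => [|k IH] s /=; first by case: s.
case: s => [|i s] /=; first by apply/allpairsP => -[[j t] []].
apply/allpairsP/idP => [[[j t] /= [jB tk [-> ->]]]|/andP [sk /andP [iB sB]]].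
  move: jB tk; rewrite mem_iota IH => /andP [_ jB] /andP [/eqP <- ->].
  by rewrite jB eqxx.
by exists (i, s); rewrite mem_iota IH iB -(eqSS (size s)) sk.
Qed.

Lemma card_tuples_words k B (P : pred (seq nat)) :
  #|[set t : k.-tuple 'I_B | P (map (@nat_of_ord B) t)]| = count P (words k B).
Proof.
rewrite cardsE cardE /enum_mem size_filter -enumT /=.
set tuples := map (fun t : k.-tuple 'I_B => map (@nat_of_ord B) t) (enum {: k.-tuple 'I_B}).
transitivity (count P tuples); first by rewrite /tuples count_map.
suff tuples_perm : perm_eq tuples (words k B) by move/permP: tuples_perm.
apply: uniq_perm; [|exact: words_uniq|].
- rewrite map_inj_uniq ?enum_uniq // => t1 t2 /(inj_map val_inj) eq_t.
  exact: val_inj.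
move=> s; rewrite mem_words; apply/mapP/idP => [[t _ ->]|/andP [/eqP sk sB]].
  by rewrite size_map size_tuple eqxx; apply/allP => _ /mapP [i _ ->].
have ts : size (pmap insub s : seq 'I_B) == k.
  by rewrite size_pmap_sub -sk -all_count.
exists (Tuple ts); first by rewrite mem_enum.
rewrite /= (pmap_filter (@insubK _ _ _)); apply/esym/all_filterP.
by apply/allP => i /(allP sB) iB; rewrite /= isSome_insub.
Qed.

Definition parts12 (y : seq nat) : bool := all (fun a => (a == 1) || (a == 2)) y.

Definition mirror2 (y : seq nat) : bool :=
  all (fun i => (nth 0 y i == 2) || (nth 0 y ((size y).-1 - i) == 2)) (iota 0 (size y)).

Lemma mirror2P y :
  reflect (forall i, i < size y -> (nth 0 y i == 2) || (nth 0 y ((size y).-1 - i) == 2))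
          (mirror2 y).
Proof.
by apply: (iffP allP) => y2 i; [move=> ilt; apply: y2; rewrite mem_iota | rewrite mem_iota => /y2].
Qed.

Lemma parts12_nth y i : parts12 y -> i < size y -> (nth 0 y i == 1) || (nth 0 y i == 2).
Proof. by move=> /allP y12 ilt; apply: y12; rewrite mem_nth. Qed.

(* The NSG conditions for x = y ++ [:: 3] with y a word over {1,2}.
   Here m = size y + 2, x_j = y_{j-1} for 1 <= j <= m-2 and x_{m-1} = 3. *)
Section NSGOfLastThree.
Variable y : seq nat.
Hypothesis y12 : parts12 y.
Let n := size y.
Let x := rcons y 3.

Lemma xat_inner i : i < n -> xat x i.+1 = nth 0 y i.
Proof. by move=> ilt; rewrite /xat /= nth_rcons ilt. Qed.

Lemma xat_last : xat x n.+1 = 3.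
Proof. by rewrite /xat /= nth_rcons ltnn eqxx. Qed.

Lemma xat_ge1 j : 0 < j <= n.+1 -> 1 <= xat x j.
Proof.
case: j => [//|j] /andP [_ jle]; case: (ltnP j n) => jn.
  by rewrite xat_inner //; case/orP: (parts12_nth y12 jn) => /eqP ->.
have -> : j = n by lia.
by rewrite xat_last.
Qed.

Lemma xat_le2 j : 0 < j <= n -> xat x j <= 2.
Proof.
case: j => [//|j] /andP [_ jle].
by rewrite xat_inner //; case/orP: (parts12_nth y12 jle) => /eqP ->.
Qed.

Lemma pair_sum_ge3 i : i < n ->
  (3 <= xat x i.+1 + xat x (n - i)) = (nth 0 y i == 2) || (nth 0 y (n.-1 - i) == 2).
Proof.
move=> ilt; have -> : n - i = (n.-1 - i).+1 by lia.
rewrite !xat_inner; try lia.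
have mirror_lt : n.-1 - i < n by lia.
by case/orP: (parts12_nth y12 ilt) => /eqP ->; case/orP: (parts12_nth y12 mirror_lt) => /eqP ->.
Qed.

(* Only the inequality x_{m-1} <= x_s + x_{m-1-s} is binding: all other
   left-hand sides are at most 2 while all right-hand sides are at least 2. *)
Lemma NSG_last3 : is_NSG x = mirror2 y.
Proof.
rewrite /is_NSG size_rcons -/n all_rcons /=.
have -> : all (fun a => 0 < a) y by apply/allP => a /(allP y12) /orP [] /eqP ->.
apply/forallP/mirror2P => [NSG i ilt|y2 s].
  have /forallP/(_ (inord (n - i)))/implyP := NSG (inord i.+1).
  rewrite !inordK; try lia.
  move=> /(_ ltac:(apply/and3P; split; lia)) /andP [+ _].
  by rewrite (_ : i.+1 + (n - i) = n.+1) ?xat_last ?pair_sum_ge3 //; lia.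
apply/forallP => t; apply/implyP => /and3P [s0 t0 st].
have := ltn_ord s; have := ltn_ord t; move=> tlt slt; apply/andP; split; last first.
  have := @xat_le2 (n.+2 - s - t); have := @xat_ge1 (n.+2 - s); have := @xat_ge1 (n.+2 - t); lia.
case: (ltnP (s + t) n.+1) => st_n.
  have := @xat_le2 (s + t); have := @xat_ge1 s; have := @xat_ge1 t; lia.
have -> : s + t = n.+1 by lia.
have [-> ->] : (s : nat) = (s.-1).+1 /\ (t : nat) = n - s.-1 by lia.
by rewrite xat_last pair_sum_ge3 ?y2; lia.
Qed.
End NSGOfLastThree.

Lemma ctilde_shape_rcons y z : ctilde_shape (rcons y z) = (z == 3) && parts12 y.
Proof.
rewrite /ctilde_shape size_rcons /= /xat /= nth_rcons ltnn eqxx.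
by rewrite -cats1 take_size_cat.
Qed.

Definition ctilde_pred (g : nat) (x : seq nat) : bool :=
  [&& is_NSG x, genus x == g & ctilde_shape x].

Lemma ctilde_pred_nil g : ctilde_pred g [::] = false.
Proof. by rewrite /ctilde_pred /ctilde_shape /= !andbF. Qed.

Lemma ctilde_pred_rcons g y z :
  ctilde_pred g (rcons y z) = [&& z == 3, parts12 y, mirror2 y & sumn y + 3 == g].
Proof.
rewrite /ctilde_pred ctilde_shape_rcons.
have [->|] := eqVneq z 3; last by rewrite !andbF.
have [y12|] := boolP (parts12 y); last by rewrite !andbF.
by rewrite NSG_last3 // /genus sumn_rcons !andbT.
Qed.

Definition wrap (p : nat * nat) (s : seq nat) : seq nat := p.1 :: rcons s p.2.

Fixpoint words12 (n : nat) : seq (seq nat) :=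
  match n with
  | 0 => [:: [::]]
  | 1 => [:: [:: 1]; [:: 2]]
  | n'.+2 => [seq wrap p s | p <- [:: (1, 1); (1, 2); (2, 1); (2, 2)], s <- words12 n']
  end.

Lemma words12_spec n : uniq (words12 n) /\ words12 n =i [pred s | (size s == n) && parts12 s].
Proof.
elim/ltn_ind: n => -[|[|n]] IH.
- by split => // s; case: s.
- split => // s; case: s => [|a [|b s]] //=.
    by rewrite !inE /parts12 /= !eqseq_cons !andbT.
  by rewrite !in_cons !eqseq_cons !andbF.
have [uniq_n mem_n] := IH n (ltnW (ltnSn _)).
split.
  apply: allpairs_uniq => // -[[a b] s] [[a' b'] s'] _ _ /= [-> /rcons_inj [-> ->]] //.
move=> s; apply/allpairsP/idP => [[[[a b] t] /= [ab t_n ->]]|].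
  rewrite inE /wrap /= size_rcons !eqSS /parts12 /= all_rcons -/(parts12 t).
  move: t_n; rewrite mem_n inE => /andP [-> ->].
  by move: ab; rewrite !inE => /or4P [] /eqP [-> ->].
case: s => [//|a s]; case/lastP: s => [//|s b].
rewrite inE /= size_rcons !eqSS /parts12 /= all_rcons => /andP [s_n /and3P [a12 b12 s12]].
exists ((a, b), s); split => //.
  by rewrite !inE; case/orP: a12 => /eqP ->; case/orP: b12 => /eqP ->.
by rewrite mem_n inE s_n.
Qed.

Lemma words12_uniq n : uniq (words12 n).
Proof. by case: (words12_spec n). Qed.

Lemma mem_words12 n s : (s \in words12 n) = (size s == n) && parts12 s.
Proof. by case: (words12_spec n) => _ ->. Qed.

(* Wrapping adds one mirror pair: positions 0 and n+1 face each other. *)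
Lemma mirror2_wrap a b z : mirror2 (wrap (a, b) z) = ((a == 2) || (b == 2)) && mirror2 z.
Proof.
set n := size z.
have nth_wrap i : nth 0 (wrap (a, b) z) i =
    if i == 0 then a else if i <= n then nth 0 z i.-1 else if i == n.+1 then b else 0.
  by case: i => [|i] //=; rewrite nth_rcons eqSS.
have mirror_inner i : i < n -> (n.+1 - i.+1 == 0) = false /\ (n.+1 - i.+1 <= n) /\
    (n.+1 - i.+1).-1 = n.-1 - i by lia.
have size_w : size (wrap (a, b) z) = n.+2 by rewrite /= size_rcons.
apply/mirror2P/andP; rewrite size_w.
  move=> w2; split; first by have := w2 0 isT; rewrite !nth_wrap /= subn0 ltnn eqxx.
  apply/mirror2P => i ilt; have := w2 i.+1 ltac:(lia).
  by rewrite !nth_wrap /= ilt; have [-> [-> ->]] := mirror_inner i ilt.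
move=> [ab /mirror2P z2] [|i] ilt; first by rewrite !nth_wrap /= subn0 ltnn eqxx.
rewrite !nth_wrap /=; case: (ltnP i n) => [ilt'|ige].
  by have [-> [-> ->]] := mirror_inner i ilt'; apply: z2.
have -> : i = n by lia.
by rewrite eqxx subnn orbC.
Qed.

Definition nb_mirror2 (n e g : nat) : nat :=
  count (fun y => mirror2 y && (sumn y + e == g)) (words12 n).

Lemma size_le_sumn y : parts12 y -> size y <= sumn y.
Proof.
elim: y => [//|a y IH] /= /andP [a12 y12].
by have := IH y12; case/orP: a12 => /eqP ->; lia.
Qed.

(* A word of length n has sum at least n, so it cannot reach a small target. *)
Lemma nb_mirror2_small n e g : g < n + e -> nb_mirror2 n e g = 0.
Proof.
move=> g_lt; rewrite /nb_mirror2 (eq_in_count (a2 := pred0)) ?count_pred0 // => y.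
rewrite mem_words12 => /andP [/eqP y_n /size_le_sumn]; rewrite y_n => n_le /=.
by rewrite (_ : (sumn y + e == g) = false) ?andbF //; apply/negbTE/eqP; lia.
Qed.

Lemma nb_mirror2_0 e g : nb_mirror2 0 e g = (e == g).
Proof. by rewrite /nb_mirror2 /= add0n addn0. Qed.

Lemma nb_mirror2_1 e g : nb_mirror2 1 e g = (e + 2 == g).
Proof. by rewrite /nb_mirror2 /= add0n !addn0 [2 + e]addnC. Qed.

(* Peeling off the outer pair: (1,2) and (2,1) add 3 to the sum, (2,2) adds 4,
   and (1,1) is forbidden. *)
Lemma nb_mirror2_wrap n e g :
  nb_mirror2 n.+2 e g = nb_mirror2 n (e + 3) g + nb_mirror2 n (e + 3) g + nb_mirror2 n (e + 4) g.
Proof.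
have pair_count a b :
    count (preim (wrap (a, b)) (fun y => mirror2 y && (sumn y + e == g))) (words12 n)
    = if (a == 2) || (b == 2) then nb_mirror2 n (e + (a + b)) g else 0.
  case: ifP => ab; last first.
    by rewrite (eq_count (a2 := pred0)) ?count_pred0 // => y; rewrite /= mirror2_wrap ab.
  apply: eq_count => y; rewrite /= mirror2_wrap ab /= sumn_rcons.
  by congr (_ && _); apply/eqP/eqP; lia.
by rewrite /nb_mirror2 /= !count_cat !count_map addn0 !pair_count /= add0n addnA.
Qed.

(* The compositions of genus g with n+1 parts correspond, by removing the last
   part 3, to mirror2 words of length n and sum g - 3. *)
Lemma count_ctilde_words n g : count (ctilde_pred g) (words n.+1 g.+1) = nb_mirror2 n 3 g.
Proof.
rewrite /nb_mirror2 -!size_filter.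
rewrite -(size_map (rcons^~ 3) [seq y <- words12 n | mirror2 y && (sumn y + 3 == g)]).
apply: perm_size; apply: uniq_perm.
- exact/filter_uniq/words_uniq.
- by rewrite map_inj_uniq; [exact/filter_uniq/words12_uniq | exact: rcons_injl].
move=> x; rewrite mem_filter mem_words.
case/lastP: x => [|y z].
  by rewrite ctilde_pred_nil; apply/esym/mapP => -[y _ /(congr1 size)]; rewrite size_rcons.
rewrite ctilde_pred_rcons size_rcons all_rcons.
have [->|z3] /= := eqVneq z 3; last first.
  by apply/esym/mapP => -[y' _ /rcons_inj [_ /eqP]]; rewrite (negbTE z3).
rewrite (mem_map (@rcons_injl _ 3)) mem_filter mem_words12 eqSS.
case y12: (parts12 y); case: (mirror2 y); case g_eq: (sumn y + 3 == g); case: (size y == n);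
  rewrite /= ?andbF //.
have g3 : 3 <= g by move/eqP: g_eq; lia.
rewrite ltnS g3 /=; apply/allP => a /(allP y12) /orP [] /eqP ->; lia.
Qed.

Definition nb_mirror2_upto (e g N : nat) : nat := \sum_(n < N) nb_mirror2 n e g.

Lemma nb_mirror2_upto_ext e g N d : g < N + e ->
  nb_mirror2_upto e g (N + d) = nb_mirror2_upto e g N.
Proof.
move=> g_lt; elim: d => [|d IH]; first by rewrite addn0.
rewrite addnS /nb_mirror2_upto big_ord_recr /= -/(nb_mirror2_upto e g (N + d)) IH.
by rewrite nb_mirror2_small ?addn0 //; lia.
Qed.

Lemma ctilde1_upto g : ctilde1 g = nb_mirror2_upto 3 g g.
Proof.
rewrite /ctilde1 (eq_bigr (fun k : 'I_g.+1 => count (ctilde_pred g) (words k g.+1))).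
  by rewrite big_ord_recl /= ctilde_pred_nil add0n; apply: eq_bigr => n _; rewrite count_ctilde_words.
by move=> k _; apply: card_tuples_words.
Qed.

Lemma nb_mirror2_upto_shift d g :
  nb_mirror2_upto (3 + d) g g = if d <= g then ctilde1 (g - d) else 0.
Proof.
case: leqP => d_le; last by rewrite /nb_mirror2_upto big1 // => n _; apply: nb_mirror2_small; lia.
rewrite -[in LHS](subnK d_le) nb_mirror2_upto_ext ?ctilde1_upto; last by lia.
apply: eq_bigr => n _; apply: eq_count => y.
by congr (_ && _); apply/eqP/eqP; lia.
Qed.

(* c(g) = [g = 3] + [g = 5] + 2 c(g-3) + c(g-4), the first two terms coming from
   the words of length 0 and 1. *)
Lemma ctilde1_rec g : ctilde1 g = (g == 3) + (g == 5) + 2 * (if 3 <= g then ctilde1 (g - 3) else 0)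
                                  + (if 4 <= g then ctilde1 (g - 4) else 0).
Proof.
rewrite ctilde1_upto -(@nb_mirror2_upto_ext 3 g g 2) ?addn2; last by lia.
rewrite /nb_mirror2_upto !big_ord_recl nb_mirror2_0 nb_mirror2_1 /=.
under eq_bigr => n _ do rewrite nb_mirror2_wrap.
rewrite !big_split /= -!/(nb_mirror2_upto _ g g) !nb_mirror2_upto_shift.
by rewrite [_ == 3]eq_sym [_ == 5]eq_sym; case: ifP => _; case: ifP => _; lia.
Qed.

(* The homogeneous recurrence, valid once the boundary terms have vanished. *)
Lemma ctilde1_rec6 k : ctilde1 (k + 6) = 2 * ctilde1 (k + 3) + ctilde1 (k + 2).
Proof. by rewrite ctilde1_rec !addnS addn0 /= !subSS !subn0. Qed.

Lemma ctilde1_first : map ctilde1 (iota 0 6) = [:: 0; 0; 0; 1; 0; 1].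
Proof.
have c0 : ctilde1 0 = 0 by rewrite ctilde1_rec.
have c1 : ctilde1 1 = 0 by rewrite ctilde1_rec.
have c2 : ctilde1 2 = 0 by rewrite ctilde1_rec.
rewrite /= c0 c1 c2 [ctilde1 3]ctilde1_rec [ctilde1 4]ctilde1_rec [ctilde1 5]ctilde1_rec /=.
by rewrite c0 c1 c2.
Qed.

Local Open Scope ring_scope.

Definition ctilde_gsum (R : realType) (r : R) (N : nat) : R :=
  \sum_(0 <= g < N) (ctilde1 g)%:R * r ^+ g.

Lemma ctilde_gsumS (R : realType) (r : R) N :
  ctilde_gsum r N.+1 = ctilde_gsum r N + (ctilde1 N)%:R * r ^+ N.
Proof. by rewrite /ctilde_gsum big_nat_recr. Qed.

Lemma ctilde_gsum_nondecreasing (R : realType) (r : R) :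
  0 <= r -> nondecreasing_seq (ctilde_gsum r).
Proof.
move=> r0; apply/nondecreasing_seqP => N; rewrite ctilde_gsumS lerDl.
by rewrite mulr_ge0 ?exprn_ge0.
Qed.

(* The recurrence for c(g), summed against r^g: multiplying the generating
   function by 1 - 2 r^3 - r^4 leaves r^3 + r^5. *)
Lemma ctilde_gsum_rec (R : realType) (r : R) N :
  ctilde_gsum r (N + 6) =
  r ^+ 3 + r ^+ 5 + 2 * r ^+ 3 * ctilde_gsum r (N + 3) + r ^+ 4 * ctilde_gsum r (N + 2).
Proof.
elim: N => [|N IH].
  have [c0 c1 c2 c3 c4 c5] := ctilde1_first.
  rewrite !add0n !ctilde_gsumS c0 c1 c2 c3 c4 c5 /ctilde_gsum big_geq //; ring.
rewrite !addSn !ctilde_gsumS IH ctilde1_rec6 natrD natrM !exprD; ring.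
Qed.

Import numFieldNormedType.Exports.
Local Open Scope classical_set_scope.

(* A nondecreasing sequence obeying S_{n+k} = K + a S_{n+i} + b S_{n+j} with
   i, j <= k, a, b >= 0 and a + b < 1 is bounded by K / (1 - a - b) and
   converges; passing to the limit in the recurrence identifies the limit. *)
Lemma cvg_linear_recurrence (R : realType) (S : nat -> R) (K a b : R) (i j k : nat) :
  nondecreasing_seq S -> (i <= k)%N -> (j <= k)%N -> 0 <= a -> 0 <= b -> a + b < 1 ->
  (forall n, S (n + k)%N = K + a * S (n + i)%N + b * S (n + j)%N) ->
  S @ \oo --> K / (1 - a - b).
Proof.
move=> S_mono ik jk a0 b0 ab1 S_rec.
have gap : 0 < 1 - a - b by lra.
have S_bound n : S (n + k)%N <= K / (1 - a - b).
  have Si : a * S (n + i)%N <= a * S (n + k)%N by rewrite ler_wpM2l // S_mono // leq_add2l.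
  have Sj : b * S (n + j)%N <= b * S (n + k)%N by rewrite ler_wpM2l // S_mono // leq_add2l.
  by rewrite ler_pdivlMr //; have := S_rec n; nra.
have S_ub : has_ubound (range S).
  by exists (K / (1 - a - b)) => _ [n _ <-]; apply: le_trans (S_bound n); rewrite S_mono // leq_addr.
set L := sup (range S).
have S_cvg : S @ \oo --> L by exact: nondecreasing_cvgn.
have shift m : [sequence S (n + m)%N]_n @ \oo --> L by rewrite cvg_shiftn.
have rec_cvg : [sequence S (n + k)%N]_n @ \oo --> K + a * L + b * L.
  rewrite (_ : [sequence _]_n = fun n => K + a * S (n + i)%N + b * S (n + j)%N).
    by apply: cvgD; [apply: cvgD; [exact: cvg_cst | exact: cvgMl_tmp (shift i)]
                    | exact: cvgMl_tmp (shift j)].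
  by apply/funext => n /=; rewrite S_rec.
have fixpoint : L = K + a * L + b * L.
  exact: cvg_unique (shift k) rec_cvg.
have -> : K / (1 - a - b) = L.
  by apply: (mulIf (lt0r_neq0 gap)); rewrite divfK ?lt0r_neq0 //; nra.
exact: S_cvg.
Qed.

Lemma inv_golden_ratio (R : realType) (r : R) :
  r = ((1 + Num.sqrt 5) / 2)^-1 -> 0 < r /\ r * r + r = 1.
Proof.
have s0 : 0 <= Num.sqrt 5 :> R := sqrtr_ge0 _.
have s5 : Num.sqrt 5 * Num.sqrt 5 = 5 :> R by rewrite -expr2 sqr_sqrtr // ler0n.
have s1 : 1 + Num.sqrt 5 != 0 :> R by rewrite lt0r_neq0 // ltr_pwDl.
have -> : ((1 + Num.sqrt 5) / 2)^-1 = (Num.sqrt 5 - 1) / 2 :> R.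
  by rewrite invf_div; apply: (mulIf s1); rewrite divfK //; nra.
by move=> ->; split; nra.
Qed.

(* If r^2 + r = 1 then 1 - 2r^3 - r^4 = r^2, since
   1 - 2r^3 - r^4 - r^2 = -(r^2 + r - 1)(r^2 + r + 1). *)
Lemma golden_denominator (R : realType) (r : R) : r * r + r = 1 ->
  1 - 2 * r ^+ 3 - r ^+ 4 = r ^+ 2.
Proof.
move=> rr; have : (r * r + r - 1) * (r * r + r + 1) = 0 by rewrite rr subrr mul0r.
rewrite !exprS expr0; nra.
Qed.

Theorem proposition16p2 (R : realType) :
  (forall g : nat,
     (ctilde1 g)%:Z
     - 2 * (if (3 <= g)%N then (ctilde1 (g - 3))%:Z else 0)
     - (if (4 <= g)%N then (ctilde1 (g - 4))%:Z else 0)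
     = (g == 3)%N%:Z + (g == 5)%N%:Z) /\
  (let omega : R := (1 + Num.sqrt 5) / 2 in
   (fun n : nat => \sum_(0 <= g < n) (ctilde1 g)%:R * omega ^- g) @ \oo
     --> omega^-1 + omega ^- 3).
Proof.
split.
  move=> g; rewrite [ctilde1 g]ctilde1_rec.
  move: (ctilde1 (g - 3)) (ctilde1 (g - 4)) (nat_of_bool (g == 3)) (nat_of_bool (g == 5)).
  by move=> c3 c4 b3 b5; case: ifP => _; case: ifP => _; lia.
move=> omega; set r := omega^-1.
have [r_gt0 r_golden] := inv_golden_ratio (erefl r).
have r2_gt0 : 0 < r ^+ 2 by rewrite exprn_gt0.
have den := golden_denominator r_golden.
have -> : (fun n => \sum_(0 <= g < n) (ctilde1 g)%:R * omega ^- g) = ctilde_gsum r.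
  by apply/funext => n; apply: eq_bigr => g _; rewrite exprVn.
have -> : omega^-1 + omega ^- 3 = (r ^+ 3 + r ^+ 5) / (1 - 2 * r ^+ 3 - r ^+ 4).
  rewrite -exprVn -/r den -[r + _](mulfK (lt0r_neq0 r2_gt0)).
  by congr (_ / _); ring.
apply: (cvg_linear_recurrence (ctilde_gsum_nondecreasing (ltW r_gt0)) _ _ _ _ _
          (ctilde_gsum_rec r)) => //.
- by rewrite mulr_ge0 // exprn_ge0 // ltW.
- by rewrite exprn_ge0 // ltW.
- lra.
Qed.
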